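(* Let $\lambda\in\mathbb{R}$, let $r\ge0$ be an integer and let $z\in\mathbb{C}$. Then, as formal power series in $t$, \[ \sum_{n=0}^{\infty}\phi_{n,\lambda}^{(r)}(|z|^2)\frac{t^n}{n!}=\langle z|\,e_\lambda^{a^{\dagger}a+r}(t)\,|z\rangle=e_\lambda^{r}(t)\,e^{|z|^2(e_\lambda(t)-1)}. \]
   Context: Notation: $(x)_0=1$, $(x)_m=x(x-1)\cdots(x-m+1)$; $(y)_{0,\lambda}=1$, $(y)_{n,\lambda}=y(y-\lambda)\cdots(y-(n-1)\lambda)$ (also for operators $y$). The degenerate exponential is $e_\lambda^{x}(t)=\sum_{k\ge0}(x)_{k,\lambda}\frac{t^k}{k!}$ (i.e. $(1+\lambda t)^{x/\lambda}$), $e_\lambda(t)=e_\lambda^1(t)$, and for an operator $X$, $e_\lambda^{X}(t)=\sum_{n\ge0}(X)_{n,\lambda}\frac{t^n}{n!}$. The degenerate $r$-Stirling numbers of the second kind ${n+r\brace k+r}_{r,\lambda}$ are defined by $(x+r)_{n,\lambda}=\sum_{k=0}^{n}{n+r\brace k+r}_{r,\lambda}(x)_k$ ($n\ge0$), and the degenerate $r$-Bell polynomials are $\phi_{n,\lambda}^{(r)}(x)=\sum_{k=0}^{n}{n+r\brace k+r}_{r,\lambda}x^k$. The boson operators $a,a^{\dagger}$ satisfy $[a,a^{\dagger}]=1$ and act on orthonormal number states $|m\rangle$ by $a|m\rangle=\sqrt{m}|m-1\rangle$, $a^{\dagger}|m\rangle=\sqrt{m+1}|m+1\rangle$; the coherent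 state is $|z\rangle=e^{-|z|^2/2}\sum_{n\ge0}\frac{z^n}{\sqrt{n!}}|n\rangle$, with $a|z\rangle=z|z\rangle$, $\langle z|z\rangle=1$. *)

From HB Require Import structures.
From mathcomp Require Import all_boot all_order all_algebra.
From mathcomp Require Import complex.
From mathcomp Require Import all_classical all_reals all_analysis.
Set Implicit Arguments. Unset Strict Implicit. Unset Printing Implicit Defensive.
Import Order.TTheory GRing.Theory Num.Theory ComplexField ComplexField.Normc.
Import numFieldNormedType.Exports.
Local Open Scope ring_scope.
Local Open Scope complex_scope.

Section Defs.
Variable R : realType.

Definition ffact (x : R) (m : nat) : R := \prod_(i < m) (x - i%:R).

Definition dfact (lam y : R) (n : nat) : R := \prod_(i < n) (y - i%:R * lam).

(* S is the family of degenerate r-Stirling numbers of the second kind: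
   S n k = {n+r brace k+r}_{r,lambda}, defined by
   (x+r)_{n,lambda} = sum_{k=0}^n S n k (x)_k for all n. *)
Definition is_deg_r_Stirling2 (lam : R) (r : nat) (S : nat -> nat -> R) :=
  forall (n : nat) (x : R), dfact lam (x + r%:R) n = \sum_(k < n.+1) S n k * ffact x k.

Definition dBell (S : nat -> nat -> R) (n : nat) (x : R) : R :=
  \sum_(k < n.+1) S n k * x ^+ k.

(* truncation at degree N of e_lambda^x(t) = sum_k (x)_{k,lambda} t^k / k! *)
Definition dexp_trunc (lam x : R) (N : nat) : {poly R} :=
  \poly_(k < N.+1) (dfact lam x k / (k`!)%:R).

(* coefficient of t^n in the formal power series
     e_lambda^r(t) * exp( y (e_lambda(t) - 1) ),
   where exp(g) = sum_k g^k/k! for g without constant term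
   (only k <= n contribute to t^n, and truncating the factors at degree n
   does not change the coefficient of t^n). *)
Definition rhs_coef (lam : R) (r : nat) (y : R) (n : nat) : R :=
  (dexp_trunc lam r%:R n *
   \sum_(k < n.+1) ((y ^+ k / (k`!)%:R) *: (dexp_trunc lam 1 n - 1) ^+ k)) `_ n.

(* ---- boson operators on coefficient sequences psi = sum_m psi m |m> ---- *)
Definition state := nat -> R[i].

Definition sqrtC' (m : nat) : R[i] := (Num.sqrt (m%:R : R))%:C.

(* a |m> = sqrt m |m-1>, so (a psi)_k = sqrt(k+1) psi_(k+1) *)
Definition ann (psi : state) : state := fun k => sqrtC' k.+1 * psi k.+1.
(* a^dagger |m> = sqrt(m+1) |m+1>, so (a^dag psi)_k = sqrt k psi_(k-1), 0 at k=0 *)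
Definition cre (psi : state) : state :=
  fun k => match k with 0 => 0 | k'.+1 => sqrtC' k * psi k' end.

Definition numop_r (r : nat) (psi : state) : state :=
  fun k => cre (ann psi) k + (r%:R : R)%:C * psi k.

Fixpoint dfact_op (lam : R) (X : state -> state) (n : nat) (psi : state) : state :=
  match n with
  | 0 => psi
  | n'.+1 => dfact_op lam X n' (fun k => X psi k - (n'%:R * lam)%:C * psi k)
  end.

Definition coherent (z : R[i]) : state :=
  fun m => (expR (- (normc z ^+ 2) / 2))%:C * z ^+ m / (Num.sqrt ((m`!)%:R : R))%:C.

Definition braket_partial (phi psi : state) (N : nat) : R[i] :=
  \sum_(m < N) (phi m)^* * psi m.

End Defs.

From HB Require Import structures.
From mathcomp Require Import all_boot all_order all_algebra.
From mathcomp Require Import complex.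
From mathcomp Require Import all_classical all_reals all_analysis.
From mathcomp Require Import ring zify.
Import Order.TTheory GRing.Theory Num.Theory ComplexField ComplexField.Normc.
Import numFieldNormedType.Exports.
Local Open Scope ring_scope.
Local Open Scope complex_scope.
Local Open Scope classical_set_scope.

(* The operator (a^dag a + r)_{n,lambda} is diagonal in the number basis with
   eigenvalue (m + r)_{n,lambda} on |m>, and |<m|z>|^2 is the Poisson weight
   e^{-x} x^m / m! with x = |z|^2.  Expanding (m + r)_{n,lambda} in falling
   factorials (m)_k and using sum_m (m)_k x^m / m! = x^k e^x gives the
   degenerate r-Bell polynomial phi^{(r)}_{n,lambda}(x).
   For the generating function, the degenerate Vandermonde identity
   (a + b)_{n,lambda} = sum_i C(n,i) (a)_{i,lambda} (b)_{n-i,lambda} says that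
   e^a_lambda(t) e^b_lambda(t) = e^{a+b}_lambda(t); hence, writing
   e_lambda(t)^m = sum_k C(m,k) (e_lambda(t) - 1)^k, the coefficients
   c_k := n! [t^n] e^r_lambda(t) (e_lambda(t) - 1)^k / k! satisfy
   (m + r)_{n,lambda} = sum_k c_k (m)_k for every m, and this expansion in
   falling factorials is unique, so c_k = S n k. *)

Section DegenerateFactorials.
Variables (R : realType) (lam : R).

Lemma dfactS (y : R) m : dfact lam y m.+1 = dfact lam y m * (y - m%:R * lam).
Proof. by rewrite /dfact big_ord_recr. Qed.

Lemma ffactS (y : R) m : ffact y m.+1 = ffact y m * (y - m%:R).
Proof. by rewrite /ffact big_ord_recr. Qed.

Lemma dfactD (a b : R) m :
  dfact lam (a + b) m =
  \sum_(i < m.+1) 'C(m, i)%:R * dfact lam a i * dfact lam b (m - i).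
Proof.
elim: m => [|m IH].
  by rewrite big_ord_recr big_ord0 /= /dfact !big_ord0 add0r !mulr1.
have split_factor (i : 'I_m.+1) :
    'C(m, i)%:R * dfact lam a i * dfact lam b (m - i) * (a + b - m%:R * lam)
    = 'C(m, i)%:R * dfact lam a i.+1 * dfact lam b (m - i)
      + 'C(m, i)%:R * dfact lam a i * dfact lam b (m.+1 - i).
  have le_im : (i <= m)%N by rewrite -ltnS.
  by rewrite (subSn le_im) !dfactS natrB //; ring.
rewrite dfactS IH mulr_suml (eq_bigr _ (fun i _ => split_factor i)) big_split /=.
rewrite [RHS]big_ord_recl /= bin0 subn0.
rewrite [in RHS](eq_bigr (fun i : 'I_m.+1 =>
   'C(m, i)%:R * dfact lam a i.+1 * dfact lam b (m - i) +
   'C(m, i.+1)%:R * dfact lam a i.+1 * dfact lam b (m - i))); last first.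
  by move=> i _; rewrite /bump /= add1n subSS binS natrD; ring.
rewrite big_split /= [RHS]addrCA; congr (_ + _).
rewrite big_ord_recl /= bin0 subn0 [in RHS]big_ord_recr /=.
by rewrite bin_small // !mul0r addr0.
Qed.

Lemma ffact_natr (m k : nat) : ffact (m%:R : R) k = (m ^_ k)%:R.
Proof.
elim: k => [|k IH]; first by rewrite /ffact big_ord0.
rewrite ffactS IH ffactnSr natrM.
have [le_km|lt_mk] := leqP k m; first by rewrite natrB.
by rewrite ffact_small // !mul0r.
Qed.

Lemma natr_fact_neq0 k : (k`!)%:R != 0 :> R.
Proof. by rewrite pnatr_eq0 -lt0n fact_gt0. Qed.

(* Evaluating at m = 0, 1, ..., N gives a triangular system, since
   (m)_k = 0 for m < k and (k)_k = k! != 0. *)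
Lemma ffact_expansion_eq0 N (d : nat -> R) :
  (forall m : nat, \sum_(k < N.+1) d k * ffact (m%:R : R) k = 0) ->
  forall k, (k <= N)%N -> d k = 0.
Proof.
move=> expansion0 k; elim/ltn_ind: k => k IH le_kN.
have := expansion0 k; rewrite (bigD1 (Ordinal (le_kN : (k < N.+1)%N))) //= big1.
  move/eqP; rewrite addr0 ffact_natr ffactnn mulf_eq0 (negbTE (natr_fact_neq0 k)).
  by rewrite orbF => /eqP.
move=> [j lt_jN] /= /eqP ne_jk; have [lt_jk|lt_kj|eq_jk] := ltngtP j k.
- by rewrite IH ?mul0r // -ltnS.
- by rewrite ffact_natr ffact_small // mulr0.
- by case: ne_jk; apply: val_inj.
Qed.

End DegenerateFactorials.

Lemma coef_expr_small (R : nzRingType) (p : {poly R}) k i :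
  p`_0 = 0 -> (i < k)%N -> (p ^+ k)`_i = 0.
Proof.
move=> p0; elim: k i => [|k IH] i //= lt_ik.
rewrite exprS coefM big_ord_recl p0 mul0r add0r big1 // => j _.
rewrite IH ?mulr0 //= /bump /= add1n subnSK //.
by rewrite -ltnS (leq_ltn_trans (leq_subr _ _)).
Qed.

Section TruncatedExponential.
Variables (R : realType) (lam : R) (N : nat).
Local Notation E a := (dexp_trunc lam a N).

Definition eq_upto (p q : {poly R}) := forall i, (i <= N)%N -> p`_i = q`_i.

Lemma eq_upto_trans {p q s : {poly R}} : eq_upto p q -> eq_upto q s -> eq_upto p s.
Proof. by move=> pq qs i le_iN; rewrite pq ?qs. Qed.

Lemma eq_uptoM {p p' q q' : {poly R}} :
  eq_upto p p' -> eq_upto q q' -> eq_upto (p * q) (p' * q').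
Proof.
move=> pp' qq' i le_iN; rewrite !coefM; apply: eq_bigr => [[j lt_ji]] _ /=.
rewrite pp' ?qq' //; first exact: leq_trans (leq_subr j i) le_iN.
exact: leq_trans le_iN.
Qed.

Lemma coef_dexp_trunc a i :
  (E a)`_i = if (i <= N)%N then dfact lam a i / (i`!)%:R else 0.
Proof. by rewrite coef_poly. Qed.

Lemma dexp_truncD a b : eq_upto (E a * E b) (E (a + b)).
Proof.
move=> i le_iN; rewrite coefM coef_dexp_trunc le_iN dfactD mulr_suml.
apply: eq_bigr => [[j lt_ji]] _ /=; have le_ji : (j <= i)%N by [].
rewrite !coef_dexp_trunc (leq_trans (leq_subr _ _) le_iN) (leq_trans le_ji le_iN).
have := bin_fact le_ji => /(congr1 (fun n => n%:R : R)); rewrite !natrM => <-.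
have := natr_fact_neq0 R j; have := natr_fact_neq0 R (i - j).
have : 'C(i, j)%:R != 0 :> R by rewrite pnatr_eq0 -lt0n bin_gt0.
by move=> ? ? ?; field; apply/and3P.
Qed.

Lemma dexp_trunc_mulX a m : eq_upto (E a * E 1 ^+ m) (E (a + m%:R)).
Proof.
elim: m => [|m IH]; first by rewrite expr0 mulr1 addr0.
rewrite exprSr mulrA -natr1 addrA.
exact: eq_upto_trans (eq_uptoM IH (fun _ _ => erefl)) (dexp_truncD _ _).
Qed.

Lemma dexp_trunc1_sub1_coef0 : (E 1 - 1)`_0 = 0.
Proof. by rewrite coefB coef_dexp_trunc coef1 /= /dfact big_ord0 divr1 subrr. Qed.

(* Only k <= min(i, m) contributes to the i-th coefficient of either sum. *)
Lemma dexp_trunc1_binom m :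
  eq_upto (\sum_(k < N.+1) 'C(m, k)%:R *: (E 1 - 1) ^+ k) (E 1 ^+ m).
Proof.
move=> i le_iN.
have -> : E 1 ^+ m = \sum_(k < m.+1) 'C(m, k)%:R *: (E 1 - 1) ^+ k.
  rewrite -{1}(subrK 1 (E 1)) addrC exprDn.
  by apply: eq_bigr => k _; rewrite expr1n mul1r scaler_nat.
pose g k := ('C(m, k)%:R *: (E 1 - 1) ^+ k)`_i.
have g0 k : (minn i m < k)%N -> g k = 0.
  move=> lt_k; rewrite /g coefZ; have [le_ki|lt_ik] := leqP k i.
    by rewrite bin_small ?mul0r //; lia.
  by rewrite coef_expr_small ?mulr0 // dexp_trunc1_sub1_coef0.
have trunc M : (minn i m < M)%N -> \sum_(k < M) g k = \sum_(k < (minn i m).+1) g k.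
  move=> lt_M; rewrite (big_ord_widen M g lt_M) [RHS]big_mkcond /=.
  by apply: eq_bigr => k _; case: ifP => // /negbT; rewrite -leqNgt => /g0.
by rewrite !coef_sum -/(g _) (trunc N.+1) ?(trunc m.+1) //; lia.
Qed.

Lemma dBell_rhs_coef (r : nat) (S : nat -> nat -> R) (x : R) :
  is_deg_r_Stirling2 lam r S -> dBell S N x = (N`!)%:R * rhs_coef lam r x N.
Proof.
move=> HS; pose c k := (E r%:R * (E 1 - 1) ^+ k)`_N.
have rhs_sum : rhs_coef lam r x N = \sum_(k < N.+1) x ^+ k / (k`!)%:R * c k.
  by rewrite /rhs_coef mulr_sumr coef_sum; apply: eq_bigr => k _; rewrite -scalerAr coefZ.
have binom_c (m : nat) :
    \sum_(k < N.+1) 'C(m, k)%:R * c k = dfact lam (m%:R + r%:R) N / (N`!)%:R.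
  transitivity ((E r%:R * \sum_(k < N.+1) 'C(m, k)%:R *: (E 1 - 1) ^+ k)`_N).
    by rewrite mulr_sumr coef_sum; apply: eq_bigr => k _; rewrite -scalerAr coefZ.
  rewrite (eq_uptoM (fun _ _ => erefl) (dexp_trunc1_binom m)) //.
  by rewrite dexp_trunc_mulX // coef_dexp_trunc leqnn addrC.
have S_c : forall k, (k <= N)%N -> S N k - (N`!)%:R * c k / (k`!)%:R = 0.
  apply: ffact_expansion_eq0 => m.
  rewrite (eq_bigr (fun k : 'I_N.+1 => S N k * ffact (m%:R : R) k
                      - (N`!)%:R * ('C(m, k)%:R * c k))); last first.
    move=> k _; rewrite mulrBl ffact_natr -bin_ffact natrM.
    by have := natr_fact_neq0 R k; move=> ?; field.
  rewrite sumrB -mulr_sumr binom_c -HS.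
  by have := natr_fact_neq0 R N; move=> ?; field.
rewrite /dBell rhs_sum mulr_sumr; apply: eq_bigr => k _.
rewrite (subr0_eq (S_c k (ltn_ord k))).
by have := natr_fact_neq0 R k; move=> ?; field.
Qed.

End TruncatedExponential.

Lemma normc_real (R : rcfType) (a : R) : `|a%:C| = `|a|%:C.
Proof. by rewrite normc_def /= expr0n addr0 sqrtr_sqr. Qed.

Lemma cvg_realC (R : realType) (u : nat -> R) (l : R) : u @ \oo --> l ->
  ((fun N => (u N)%:C) : nat -> R[i]^o) @ \oo --> (l%:C : R[i]^o).
Proof.
move=> ul; apply/cvgrPdist_lt => e e0.
move: (e0); rewrite ltcE => /andP[/eqP Im_e Re_e0].
move/cvgrPdist_lt: ul => /(_ _ Re_e0); apply: filterS => N ltN.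
by rewrite -rmorphB normc_real ltcE /= Im_e eqxx ltN.
Qed.

Section CoherentExpectation.
Variable R : realType.

Definition poisson (x : R) (m : nat) : R := expR (- x) * x ^+ m / (m`!)%:R.

Lemma coherent_conjM (z : R[i]) m (D : R) :
  (coherent z m)^* * (D%:C * coherent z m) = (D * poisson (normc z ^+ 2) m)%:C.
Proof.
have normz : `|z| = (normc z)%:C by case: z.
have -> : (coherent z m)^* * (D%:C * coherent z m) = D%:C * `|coherent z m| ^+ 2.
  by rewrite sqr_normc; ring.
rewrite /coherent /poisson normrM normfV normrM normrX !normc_real normz.
rewrite (ger0_norm (expR_ge0 _)) (ger0_norm (sqrtr_ge0 _)).
rewrite -!(rmorphM, rmorphXn, fmorphV); congr (_%:C).
have sqr_e : expR (- (normc z ^+ 2) / 2) ^+ 2 = expR (- (normc z ^+ 2)).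
  by rewrite expr2 -expRD; congr expR; field.
have sqr_s : Num.sqrt ((m`!)%:R : R) ^+ 2 = (m`!)%:R by rewrite sqr_sqrtr // ler0n.
by rewrite expr_div_n exprMn sqr_e sqr_s -exprM mulnC exprM.
Qed.

Lemma sum_ffact_exp_coeff k (x : R) M :
  \sum_(m < M) ffact (m%:R : R) k * (x ^+ m / (m`!)%:R)
  = x ^+ k * series (exp_coeff x) (M - k)%N.
Proof.
elim: M => [|M IH]; first by rewrite big_ord0 sub0n /series /= big_geq // mulr0.
rewrite big_ord_recr /= IH ffact_natr.
have [le_kM|lt_Mk] := leqP k M; last first.
  by rewrite ffact_small // mul0r addr0 (_ : M.+1 - k = M - k)%N //; lia.
rewrite (subSn le_kM) /series /= big_nat_recr //= mulrDr; congr (_ + _).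
have ffact_neq0 : (M ^_ k)%:R != 0 :> R by rewrite pnatr_eq0 -lt0n ffact_gt0.
rewrite /exp_coeff /= -[in x ^+ M](subnKC le_kM) exprD -(ffact_fact le_kM) natrM.
by have := natr_fact_neq0 R (M - k); move=> ?; field; apply/andP.
Qed.

Lemma cvg_sum_ffact_exp_coeff k (x : R) :
  (fun M => \sum_(m < M) ffact (m%:R : R) k * (x ^+ m / (m`!)%:R)) @ \oo
  --> x ^+ k * expR x.
Proof.
under eq_cvg do rewrite sum_ffact_exp_coeff.
by apply: cvgMl_tmp; rewrite cvg_centern; exact: is_cvg_series_exp_coeff.
Qed.

Variables (lam : R) (r : nat).

Lemma numop_r_diag (psi : state R) k : numop_r r psi k = ((k + r)%:R : R)%:C * psi k.
Proof.
rewrite /numop_r /cre /ann; case: k => [|k]; first by rewrite add0r add0n.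
by rewrite mulrA /sqrtC' -rmorphM -expr2 sqr_sqrtr ?ler0n // natrD rmorphD mulrDl.
Qed.

Lemma dfact_op_diag n (psi : state R) k :
  dfact_op lam (numop_r r) n psi k = (dfact lam (k + r)%:R n)%:C * psi k.
Proof.
elim: n psi => [|n IH] psi /=; first by rewrite /dfact big_ord0 mul1r.
by rewrite IH numop_r_diag dfactS !rmorphM rmorphB rmorphM /=; ring.
Qed.

Lemma braket_coherent_dfact_op (z : R[i]) n N :
  braket_partial (coherent z) (dfact_op lam (numop_r r) n (coherent z)) N
  = (\sum_(m < N) dfact lam (m + r)%:R n * poisson (normc z ^+ 2) m)%:C.
Proof.
rewrite rmorph_sum; apply: eq_bigr => m _.
by rewrite dfact_op_diag coherent_conjM.
Qed.

Lemma cvg_sum_dfact_poisson (S : nat -> nat -> R) n (x : R) :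
  is_deg_r_Stirling2 lam r S ->
  (fun N => \sum_(m < N) dfact lam (m + r)%:R n * poisson x m) @ \oo --> dBell S n x.
Proof.
move=> HS.
have -> : dBell S n x = \sum_(k < n.+1) S n k * (expR (- x) * (x ^+ k * expR x)).
  apply: eq_bigr => k _.
  by rewrite [expR (- x) * _]mulrCA (mulrC (expR (- x))) expRxMexpNx_1 mulr1.
have expand N : \sum_(m < N) dfact lam (m + r)%:R n * poisson x m =
    \sum_(k < n.+1) S n k *
      (expR (- x) * \sum_(m < N) ffact (m%:R : R) k * (x ^+ m / (m`!)%:R)).
  under eq_bigr => m _ do rewrite natrD HS mulr_suml.
  rewrite exchange_big /=; apply: eq_bigr => k _.
  rewrite !mulr_sumr; apply: eq_bigr => m _; rewrite /poisson; ring.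
rewrite (funext expand); apply: cvg_big => // [|k _]; first exact: add_continuous.
by apply: cvgMl_tmp; apply: cvgMl_tmp; exact: (cvg_sum_ffact_exp_coeff k x).
Qed.

End CoherentExpectation.

Theorem theorem8 (R : realType) (lam : R) (r : nat) (z : R[i])
  (S : nat -> nat -> R) (HS : is_deg_r_Stirling2 lam r S) (n : nat) :
  ((braket_partial (coherent z) (dfact_op lam (numop_r r) n (coherent z)) : nat -> R[i]^o) @ \oo
     --> ((dBell S n (normc z ^+ 2))%:C : R[i]^o))
  /\ dBell S n (normc z ^+ 2) = (n`!)%:R * rhs_coef lam r (normc z ^+ 2) n.
Proof.
split; last exact: dBell_rhs_coef.
under eq_cvg do rewrite braket_coherent_dfact_op.
exact/cvg_realC/cvg_sum_dfact_poisson.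
Qed.
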